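(* Let $n\ge5$ and $\alpha^*=\bigl(n(n-1)(n-2),-6(n-2),-8\bigr)$. Then for all $v\in\mathbb{C}^{n-1}$, $$Q\,g_{\alpha^*}(Pv)=c_n\,\bigl(v_1T_1(v),\,v_2T_2(v),\dots,v_{n-1}T_{n-1}(v)\bigr)$$ for a nonzero constant $c_n$ depending only on $n$, where $$T_k(v)=v_k^3-\frac{4}{n-1}\,v_k^2\,S_1(\widehat{v_k})+\frac{12}{(n-1)(n-2)}\,v_k\,S_2(\widehat{v_k})-\frac{24}{(n-1)(n-2)(n-4)}\,S_3(\widehat{v_k}).$$ (For $n=8$, after multiplying by $7$, $T_k=7v_k^3-4v_k^2S_1(\widehat{v_k})+2v_kS_2(\widehat{v_k})-S_3(\widehat{v_k})$.)
   Context: For $x\in\mathbb{C}^n$ let $F_k(x)=\sum_{\ell=1}^n x_\ell^k$, $f_k(x)_\ell=F_k(x)-n\,x_\ell^k$, and $g_\alpha=\alpha_1 f_4+\alpha_2F_2f_2+\alpha_3F_3f_1$. Define linear maps $P:\mathbb{C}^{n-1}\to\mathbb{C}^n$ by $(Pv)_i=\bigl(\sum_{j=1}^{n-1}v_j\bigr)-n\,v_i$ for $1\le i\le n-1$ and $(Pv)_n=\sum_{j=1}^{n-1}v_j$, and $Q:\mathbb{C}^n\to\mathbb{C}^{n-1}$ by $(Qx)_i=x_n-x_i$. (These place the $n$-point orbit of $[1-n,1,\dots,1]$ at the coordinate vertices $[1,0,\dots,0],\dots,[0,\dots,0,1]$ and $[1,\dots,1]$.) For $v\in\mathbb{C}^{n-1}$,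 $\widehat{v_k}\in\mathbb{C}^{n-2}$ denotes $v$ with the $k$-th coordinate deleted, and $S_j$ is the $j$-th elementary symmetric polynomial in $n-2$ variables. *)

From HB Require Import structures.
From mathcomp Require Import all_boot all_order all_algebra.
Set Implicit Arguments. Unset Strict Implicit. Unset Printing Implicit Defensive.
Import Order.TTheory GRing.Theory Num.Theory.
Local Open Scope ring_scope.

(* Vectors in C^N are functions 'I_N -> R; coordinate l (1-based in the
   paper) is index l-1 here. *)
Section Defs.
Variable R : numClosedFieldType.

Definition Fk (N : nat) (k : nat) (x : 'I_N -> R) : R := \sum_(l < N) x l ^+ k.

Definition fk (N : nat) (k : nat) (x : 'I_N -> R) (l : 'I_N) : R :=
  Fk k x - N%:R * x l ^+ k.

Definition g_alpha (N : nat) (a1 a2 a3 : R) (x : 'I_N -> R) (l : 'I_N) : R :=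
  a1 * fk 4 x l + a2 * Fk 2 x * fk 2 x l + a3 * Fk 3 x * fk 1 x l.

(* P : C^m -> C^(m+1) (here n = m+1):
   (Pv)_i = sum_j v_j - n v_i for i <= m, (Pv)_{m+1} = sum_j v_j. *)
Definition Pmap (m : nat) (v : 'I_m -> R) (i : 'I_m.+1) : R :=
  \sum_(j < m) v j - (if unlift ord_max i is Some j then m.+1%:R * v j else 0).

Definition Qmap (m : nat) (x : 'I_m.+1 -> R) (i : 'I_m) : R :=
  x ord_max - x (widen_ord (leqnSn m) i).

Definition S_hat (m : nat) (j : nat) (v : 'I_m -> R) (k : 'I_m) : R :=
  \sum_(A : {set 'I_m} | (#|A| == j) && (k \notin A)) \prod_(i in A) v i.

(* T_k(v), with n the ambient dimension *)
Definition T_k (n : nat) (m : nat) (v : 'I_m -> R) (k : 'I_m) : R :=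
  v k ^+ 3
  - 4%:R / (n.-1)%:R * v k ^+ 2 * S_hat 1 v k
  + 12%:R / ((n.-1)%:R * (n - 2)%:R) * v k * S_hat 2 v k
  - 24%:R / ((n.-1)%:R * (n - 2)%:R * (n - 4)%:R) * S_hat 3 v k.

End Defs.

From HB Require Import structures.
From mathcomp Require Import all_boot all_order all_algebra.
From mathcomp Require Import ring.
Import Order.TTheory GRing.Theory Num.Theory.
Local Open Scope ring_scope.

(* Since f_k(x)_l = F_k(x) - n x_l^k, the map Q kills the F_k terms: Q g_alpha
   only involves x_i^k - x_n^k and the two power sums F_2, F_3.  At x = Pv we
   have x_n = s := sum_j v_j and x_i = s - n v_i, and F_2(Pv), F_3(Pv) are
   polynomials in s and the power sums of v.  Splitting off v_k and rewriting
   the power sums of the remaining coordinates by Newton's identities in terms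
   of S_1, S_2, S_3 of v with v_k deleted, both sides become polynomials in
   v_k, S_1, S_2, S_3, and the identity is checked by field arithmetic. *)

Section ElementarySymmetricOn.
Variables (R : comPzRingType) (m : nat) (v : 'I_m -> R).

Definition esym_on (j : nat) (D : {set 'I_m}) : R :=
  \sum_(A : {set 'I_m} | (A \subset D) && (#|A| == j)) \prod_(i in A) v i.

Definition psum_on (p : nat) (D : {set 'I_m}) : R := \sum_(i in D) v i ^+ p.

Lemma esym_on0 D : esym_on 0 D = 1.
Proof.
rewrite /esym_on (bigD1 set0) /=; last by rewrite sub0set cards0.
rewrite big_set0 big1 ?addr0 // => A /andP[/andP[_ /eqP/cards0_eq ->]].
by rewrite eqxx.
Qed.

Lemma esym_on_set0 j : esym_on j.+1 set0 = 0.
Proof.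
rewrite /esym_on big1 // => A /andP[]; rewrite subset0 => /eqP ->.
by rewrite cards0.
Qed.

Lemma subsetU1_notin (a : 'I_m) (B D : {set 'I_m}) :
  a \notin B -> (B \subset a |: D) = (B \subset D).
Proof.
move=> aB; apply/subsetP/subsetP => BsubD x xB; last by rewrite !inE BsubD ?orbT.
by have := BsubD x xB; rewrite !inE => /orP[/eqP ax|//]; rewrite -ax xB in aB.
Qed.

Lemma esym_onU1 j (a : 'I_m) (D : {set 'I_m}) : a \notin D ->
  esym_on j.+1 (a |: D) = esym_on j.+1 D + v a * esym_on j D.
Proof.
move=> aD; have aNsub (A : {set 'I_m}) : a \in A -> ~~ (A \subset D).
  by move=> aA; apply/negP => /subsetP/(_ a aA); rewrite (negbTE aD).
rewrite /esym_on (bigID (fun A : {set 'I_m} => a \in A)) /= addrC.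
congr (_ + _).
  apply: eq_bigl => A; case aA: (a \in A) => /=.
    by rewrite andbF; apply/esym/negbTE/nandP; left; apply: aNsub.
  by rewrite andbT subsetU1_notin ?aA.
rewrite mulr_sumr (reindex_onto (fun B => a |: B) (fun A => A :\ a)) /=;
  last by move=> A /andP[_ aA]; rewrite setD1K.
apply: eq_big => [B|B /andP[_ /eqP BaB]]; last first.
  by rewrite big_setU1 // -BaB setD11.
case aB: (a \in B).
  have -> : ((a |: B) :\ a == B) = false.
    by apply/negbTE/eqP => e; move: aB; rewrite -e setD11.
  by rewrite andbF; apply/esym/negbTE/nandP; left; apply: aNsub.
rewrite setU1K ?aB // eqxx setU11 !andbT cardsU1 aB add1n eqSS.
by rewrite subUset sub1set setU11 /= subsetU1_notin ?aB.
Qed.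

Lemma newton_on3 D :
  [/\ psum_on 1 D = esym_on 1 D,
      psum_on 2 D = esym_on 1 D ^+ 2 - 2 * esym_on 2 D &
      psum_on 3 D = esym_on 1 D ^+ 3 - 3 * esym_on 1 D * esym_on 2 D
                    + 3 * esym_on 3 D].
Proof.
elim: {D}_.+1 {-2}D (ltnSn #|D|) => // c IH D Dc.
have [->|[a aD]] := set_0Vmem D.
  by rewrite /psum_on !big_set0 !esym_on_set0; split; ring.
have aDa : a \notin D :\ a by rewrite setD11.
have [h1 h2 h3] := IH (D :\ a) (leq_trans (proper_card (properD1 aD)) Dc).
rewrite -(setD1K aD) /psum_on !big_setU1 //= -!/(psum_on _ _) h1 h2 h3.
by rewrite !esym_onU1 // !esym_on0; split; ring.
Qed.

End ElementarySymmetricOn.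
Arguments esym_on {R m}.
Arguments psum_on {R m}.
Arguments newton_on3 {R m}.

Section Coordinates.
Variable R : numClosedFieldType.

Lemma S_hat_esym_on m j (v : 'I_m -> R) k : S_hat j v k = esym_on v j [set~ k].
Proof.
rewrite /S_hat /esym_on; apply: eq_bigl => A; rewrite andbC; congr (_ && _).
apply/idP/subsetP => [kA x xA|AsubC].
  by rewrite in_setC1; apply: contraNneq kA => <-.
by apply/negP => /AsubC; rewrite in_setC1 eqxx.
Qed.

Lemma sum_expr_setC1 {m} p (v : 'I_m -> R) k :
  \sum_(i < m) v i ^+ p = v k ^+ p + psum_on v p [set~ k].
Proof.
by rewrite (bigD1 k) //=; congr (_ + _); apply: eq_bigl => i; rewrite in_setC1.
Qed.

Lemma Qmap_g_alpha m (a1 a2 a3 : R) (x : 'I_m.+1 -> R) i :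
  let xi := x (widen_ord (leqnSn m) i) in let xn := x ord_max in
  Qmap (g_alpha a1 a2 a3 x) i =
    m.+1%:R * (a1 * (xi ^+ 4 - xn ^+ 4) + a2 * Fk 2 x * (xi ^+ 2 - xn ^+ 2)
               + a3 * Fk 3 x * (xi - xn)).
Proof. by rewrite /Qmap /g_alpha /fk /=; ring. Qed.

Section PmapCoordinates.
Variables (m : nat) (v : 'I_m -> R).
Let s := \sum_(j < m) v j.
Let N : R := m.+1%:R.

Lemma Pmap_widen i : Pmap v (widen_ord (leqnSn m) i) = s - N * v i.
Proof.
have -> : widen_ord (leqnSn m) i = lift ord_max i.
  by apply: val_inj; rewrite /= /bump leqNgt ltn_ord.
by rewrite /Pmap liftK.
Qed.

Lemma Pmap_max : Pmap v ord_max = s.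
Proof. by rewrite /Pmap unlift_none subr0. Qed.

Lemma Fk_Pmap p : Fk p (Pmap v) = \sum_(i < m) (s - N * v i) ^+ p + s ^+ p.
Proof.
rewrite /Fk big_ord_recr /= Pmap_max; congr (_ + _).
by apply: eq_bigr => i _; rewrite Pmap_widen.
Qed.

Lemma Fk2_Pmap : Fk 2 (Pmap v) = N * (N * \sum_(i < m) v i ^+ 2 - s ^+ 2).
Proof.
rewrite Fk_Pmap.
have expand i : (s - N * v i) ^+ 2 = s ^+ 2 - 2 * N * s * v i + N ^+ 2 * v i ^+ 2.
  by ring.
under eq_bigr => i _ do rewrite expand.
rewrite !big_split /= !sumrN -!mulr_sumr sumr_const card_ord -mulr_natl.
rewrite -/s /N; ring.
Qed.

Lemma Fk3_Pmap : Fk 3 (Pmap v) =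
  N * (3 * N * s * \sum_(i < m) v i ^+ 2 - N ^+ 2 * \sum_(i < m) v i ^+ 3
       - 2 * s ^+ 3).
Proof.
rewrite Fk_Pmap.
have expand i : (s - N * v i) ^+ 3
    = s ^+ 3 - 3 * N * s ^+ 2 * v i + 3 * N ^+ 2 * s * v i ^+ 2
      - N ^+ 3 * v i ^+ 3 by ring.
under eq_bigr => i _ do rewrite expand.
rewrite !big_split /= !sumrN -!mulr_sumr sumr_const card_ord -mulr_natl.
rewrite -/s /N; ring.
Qed.

End PmapCoordinates.
End Coordinates.
Arguments sum_expr_setC1 {R m}.

Theorem mainTheorem12 (R : numClosedFieldType) (n : nat) (hn : (5 <= n)%N) :
  exists c : R, c != 0 /\
    forall (v : 'I_n.-1 -> R) (k : 'I_n.-1),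
      Qmap (g_alpha (n * (n - 1) * (n - 2))%:R (- (6 * (n - 2))%:R) (- 8%:R)
                    (Pmap v)) k
      = c * (v k * T_k n v k).
Proof.
case: n hn => [|[|[|[|[|q]]]]] // _.
exists ((q.+4.+1 ^ 5 * q.+4 * q.+3 * q.+1)%:R); split.
  by rewrite pnatr_eq0 -lt0n !muln_gt0.
move=> v k /=.
rewrite Qmap_g_alpha Fk2_Pmap Fk3_Pmap Pmap_widen Pmap_max /T_k !S_hat_esym_on.
rewrite !(sum_expr_setC1 _ _ k).
have -> : \sum_(j < q.+4) v j = v k + psum_on v 1 [set~ k].
  by rewrite -[v k]expr1 -sum_expr_setC1; apply: eq_bigr => i _; rewrite expr1.
have [-> -> ->] := newton_on3 v [set~ k].
have -> : (q.+4.+1 - 1 = q.+4)%N by rewrite subn1.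
have -> : (q.+4.+1 - 2 = q.+3)%N by [].
have -> : (q.+4.+1 - 4 = q.+1)%N by [].
move: (esym_on v 1 _) (esym_on v 2 _) (esym_on v 3 _) (v k) => e1 e2 e3 t /=.
field.
have nz p : (p.+1)%:R + q%:R != 0 :> R by rewrite -natrD pnatr_eq0.
by rewrite (nz 0%N) (nz 2%N) (nz 3%N).
Qed.
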